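(* Let $h(x)$ be a monic irreducible polynomial over $GF(q)$ of degree $m>1$ and order $n$ with $n\ne q^m-1$, and let $J\subseteq A_n$ be the minimal ideal (irreducible cyclic code) with parity-check polynomial $h(x)$. Let $R=(q^m-1)/(q-1)$ and $$d=\gcd(q-1,n),\qquad r=n/d.$$ Then every cycle of $J$ (of a nonzero element) is contained in exactly $r$ proportionality classes, each of which contains exactly $d$ distinct vectors of the cycle; i.e. for every nonzero $z\in J$ one has $d_z=d$ and $r_z=r$. Moreover $1\le r\le R$, $r\mid R$, and $1\le d\le q-1$.
   Context: Let $q>2$ be a prime power. The order $\mathrm{ord}(f)$ of a polynomial $f$ with $f(0)\ne0$ is the least $e\ge1$ with $f\mid x^e-1$; $\gcd(n,q)=1$ holds automatically. $A_n=GF(q)[x]/(x^n-1)$; $J$ is the ideal generated by $(x^n-1)/h(x)$. For nonzero $z\in A_n$: $P_z=\{\alpha z:\alpha\in GF(q)^*\}$ is its proportionality class; $\{z\}=\{x^iz:i\ge0\}$ is its cycle; its period $n_z$ is the least $e\ge1$ with $x^ez=z$ (every nonzero element of $J$ has period $n$); $r_z$ is the least positive integer such that $x^{r_z}z=\alpha z$ for some $\alpha\in GF(q)^*$, and $d_z=n_z/r_z$. *)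

From HB Require Import structures.
From mathcomp Require Import all_boot all_order all_algebra all_field.
Set Implicit Arguments. Unset Strict Implicit. Unset Printing Implicit Defensive.
Import GRing.Theory.
Local Open Scope ring_scope.

Definition is_least (P : nat -> Prop) (k : nat) : Prop :=
  (0 < k)%N /\ P k /\ forall e : nat, (0 < e)%N -> (e < k)%N -> ~ P e.

Definition poly_order (F : fieldType) (f : {poly F}) (e : nat) : Prop :=
  is_least (fun k => f %| 'X^k - 1) e.

(* Elements of A_n = F[x]/(x^n - 1) are represented by polynomials;
   equality in A_n is congruence modulo x^n - 1. *)
Definition eqA (F : fieldType) (n : nat) (a b : {poly F}) : Prop :=
  ('X^n - 1) %| (a - b).

Definition nonzeroA (F : fieldType) (n : nat) (z : {poly F}) : Prop :=
  ~ eqA n z 0.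

Definition inJ (F : fieldType) (n : nat) (h z : {poly F}) : Prop :=
  exists a : {poly F}, eqA n z (a * (('X^n - 1) %/ h)).

Definition periodA (F : fieldType) (n : nat) (z : {poly F}) (e : nat) : Prop :=
  is_least (fun k => eqA n ('X^k * z) z) e.

Definition propA (F : fieldType) (n : nat) (z : {poly F}) (e : nat) : Prop :=
  is_least (fun k => exists2 alpha : F, alpha != 0 & eqA n ('X^k * z) (alpha *: z)) e.

From HB Require Import structures.
From mathcomp Require Import all_boot all_order all_algebra all_field.
Set Implicit Arguments. Unset Strict Implicit. Unset Printing Implicit Defensive.
Import GRing.Theory.
Local Open Scope ring_scope.

(* Let q = #|F|, let K = F[X]/(h) (a field with q^m elements) and let x be
   the residue of X in K.  Since h has order n, x^k = 1 in K iff n | k.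
   - Transfer: if z = a g in A_n, with g = (X^n - 1)/h, and z <> 0, then h
     does not divide a, hence (X^n - 1) | w z  <->  h | w.  Consequently
     x^k z = alpha z in A_n  <->  x^k = alpha in K.
   - The nonzero constants of K are exactly its (q-1)-th roots of unity,
     because X^q - X is the product of the X - a, a in F.
   - Hence x^k is a nonzero constant iff n | k (q-1) iff r | k, where
     r = n / gcd(q-1, n): the period of z is n, r_z = r and d_z = n / r = d.
   - Arithmetic: n | q^m - 1 (x is a unit of K) and q - 1 | q^m - 1, so
     r (q-1) = lcm(n, q-1) divides q^m - 1, i.e. r | R. *)

Lemma dvdn_mul_gcd (c n k : nat) :
  (0 < n)%N -> (n %| k * c)%N = (n %/ gcdn c n %| k)%N.
Proof.
move=> n_gt0; rewrite dvdn_divLR ?gcdn_gt0 ?n_gt0 ?orbT ?dvdn_gcdr //.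
by rewrite muln_gcdr dvdn_gcd (dvdn_mull _ (dvdnn n)) andbT.
Qed.

Lemma divn_gcd_mul (c n : nat) : (n %/ gcdn c n * c)%N = lcmn n c.
Proof. by rewrite divn_mulAC ?dvdn_gcdr // gcdnC. Qed.

Lemma dvdn_sub1_expn (q m : nat) : (q - 1 %| q ^ m - 1)%N.
Proof. by rewrite !subn1 predn_exp dvdn_mulr. Qed.

Lemma is_least_dvdn (P : nat -> Prop) (n : nat) :
  (0 < n)%N -> (forall k, P k <-> (n %| k)%N) -> is_least P n.
Proof.
move=> n_gt0 HP; split=> //; split=> [|e e_gt0 lt_en /HP /(dvdn_leq e_gt0)].
  exact/HP.
by rewrite leqNgt lt_en.
Qed.

Lemma is_least_iff (P Q : nat -> Prop) (n : nat) :
  (forall k, P k <-> Q k) -> is_least P n -> is_least Q n.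
Proof.
move=> PQ [n_gt0 [Pn minP]]; split=> //; split=> [|e e_gt0 lt_en /PQ]; first exact/PQ.
exact: minP.
Qed.

Lemma expr_eq1_dvdn (R : pzRingType) (y : R) (n : nat) :
  is_least (fun k => y ^+ k = 1) n -> forall k, y ^+ k = 1 <-> (n %| k)%N.
Proof.
move=> [n_gt0 [yn minn]] k; split=> [yk|/dvdnP[j ->]]; last first.
  by rewrite mulnC exprM yn expr1n.
have: y ^+ (k %% n) = 1 by rewrite (expr_mod k yn).
have [kn0|kn_gt0] := posnP (k %% n); first by rewrite /dvdn kn0.
by move/(minn _ kn_gt0 (ltn_pmod k n_gt0)).
Qed.

Lemma finfield_unit_expr (L : finFieldType) (y : L) :
  y != 0 -> y ^+ (#|L| - 1) = 1.
Proof.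
move=> y_neq0; apply: (mulfI y_neq0).
by rewrite mulr1 -exprS subn1 prednK ?expf_card // ltnW ?finNzRing_gt1.
Qed.

Section FrobeniusFixed.
Variables (F : finFieldType) (L : idomainType) (f : {rmorphism F -> L}).

(* Evaluate X^q - X = prod_(a in F) (X - a), mapped by f, at y. *)
Lemma frobenius_fixed_image (y : L) : y ^+ #|F| = y -> exists a : F, y = f a.
Proof.
move=> fix_y; have := congr1 (fun p => (map_poly f p).[y]) (finField_genPoly F).
rewrite /= rmorphB /= map_polyXn map_polyX !hornerE fix_y subrr rmorph_prod /=.
rewrite horner_prod => /esym/eqP/prodf_eq0[a _].
by rewrite map_polyXsubC hornerXsubC subr_eq0 => /eqP->; exists a.
Qed.

Lemma unit_image_roots (y : L) :
  (exists2 a : F, a != 0 & y = f a) <-> y ^+ (#|F| - 1) = 1.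
Proof.
split=> [[a a_neq0 ->]|y_root]; first by rewrite -rmorphXn finfield_unit_expr ?rmorph1.
have y_neq0 : y != 0.
  apply/eqP => y0; have := y_root.
  by rewrite y0 expr0n subn_eq0 leqNgt finNzRing_gt1 => /eqP; rewrite eq_sym oner_eq0.
have [a fa] : exists a : F, y = f a.
  apply: frobenius_fixed_image.
  by rewrite -{2}[y]mulr1 -y_root -exprS subn1 prednK // ltnW ?finNzRing_gt1.
by exists a => //; apply: contraNneq y_neq0 => a0; rewrite fa a0 rmorph0.
Qed.
End FrobeniusFixed.

Section QuotientField.
Variables (F : finFieldType) (h : {poly F}).
Hypothesis hI : monic_irreducible_poly h.
Local Notation K := {poly %/ h with hI}.

Definition residue (p : {poly F}) : K := in_qpoly h p.
Local Notation x := (residue 'X).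

Lemma residue_eq0 (p : {poly F}) : (residue p == 0) = (h %| p).
Proof.
have [_ h_monic] := hI.
by rewrite -val_eqE /= mk_monicE // /dvdp (Pdiv.IdomainMonic.modpE h_monic).
Qed.

Lemma residue_XnsubC (k : nat) (a : F) :
  (h %| 'X^k - a%:P) = (x ^+ k == in_alg K a).
Proof.
rewrite -residue_eq0 /residue raddfB /= rmorphXn /= subr_eq0.
by rewrite -alg_polyC in_qpolyZ in_qpoly1.
Qed.

Variable n : nat.
Hypothesis order_h : poly_order h n.

Lemma residue_X_order (k : nat) : x ^+ k = 1 <-> (n %| k)%N.
Proof.
apply: expr_eq1_dvdn; apply: is_least_iff order_h => j.
by rewrite -polyC1 residue_XnsubC rmorph1; split=> /eqP.
Qed.

(* x is a unit of K, which has q^(deg h) elements, so n | q^(deg h) - 1. *)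
Lemma order_dvdn_card : (n %| #|F| ^ (size h).-1 - 1)%N.
Proof.
rewrite -card_qfpoly; apply/residue_X_order/finfield_unit_expr/eqP => x0.
have [n_gt0 _] := order_h; have := (residue_X_order n).2 (dvdnn n).
by rewrite x0 expr0n eqn0Ngt n_gt0 => /eqP; rewrite eq_sym oner_eq0.
Qed.

Lemma residue_X_constant_power (k : nat) :
  (exists2 a : F, a != 0 & x ^+ k = in_alg K a) <->
  (n %/ gcdn (#|F| - 1) n %| k)%N.
Proof.
apply: (iff_trans (unit_image_roots _ _)); rewrite -exprM.
apply: (iff_trans (residue_X_order _)); rewrite dvdn_mul_gcd //.
by case: order_h.
Qed.

End QuotientField.

Section CyclicCode.
Variables (F : finFieldType) (h : {poly F}) (n : nat).
Hypothesis hI : monic_irreducible_poly h.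
Hypothesis order_h : poly_order h n.
Local Notation K := {poly %/ h with hI}.
Local Notation x := (residue hI 'X).
Local Notation g := (('X^n - 1) %/ h).

Lemma h_dvd_Xn1 : h %| 'X^n - 1.
Proof. by case: order_h => _ []. Qed.

(* The generator g of J is a nonzero polynomial, as X^n - 1 = g h <> 0. *)
Lemma g_neq0 : g != 0.
Proof.
have [n_gt0 _] := order_h.
have Xn1_neq0 : 'X^n - 1 != 0 :> {poly F} by rewrite monic_neq0 // -polyC1 monicXnsubC.
by apply: contraNneq Xn1_neq0 => g0; rewrite -(divpK h_dvd_Xn1) g0 mul0r.
Qed.

Variables z a : {poly F}.
Hypothesis z_in_J : eqA n z (a * g).
Hypothesis z_neq0 : nonzeroA n z.

(* Otherwise z = a g would be a multiple of h g = X^n - 1, i.e. zero. *)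
Lemma h_ndvd_a : ~~ (h %| a).
Proof.
apply: contra_notN z_neq0 => h_dvd_a; rewrite /eqA subr0.
rewrite -[z](subrK (a * g)) dvdp_addl // -[X in X %| _](divpK h_dvd_Xn1) mulrC.
exact: dvdp_mul.
Qed.

(* The annihilator of z in A_n is the ideal generated by h: w z = 0 iff
   X^n - 1 = g h | w a g iff h | w a iff h | w, as h is irreducible. *)
Lemma annihilator_z (w : {poly F}) : (('X^n - 1) %| w * z) = (h %| w).
Proof.
rewrite -[z](subrK (a * g)) mulrDr dvdp_addr; last exact: dvdp_mull.
rewrite -{1}(divpK h_dvd_Xn1) mulrA [_ * h]mulrC dvdp_mul2r ?g_neq0 //.
rewrite -!(residue_eq0 hI) /residue in_qpolyM mulf_eq0.
by move: h_ndvd_a; rewrite -(residue_eq0 hI) => /negbTE->; rewrite orbF.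
Qed.

Lemma shift_eq_scale (k : nat) (alpha : F) :
  eqA n ('X^k * z) (alpha *: z) <-> x ^+ k = in_alg K alpha.
Proof.
rewrite /eqA -mul_polyC -mulrBl annihilator_z residue_XnsubC.
by split=> /eqP.
Qed.

Lemma period_z : periodA n z n.
Proof.
apply: is_least_dvdn => [|k]; first by case: order_h.
rewrite -{2}[z]scale1r; apply: (iff_trans (shift_eq_scale k 1)).
by rewrite rmorph1; apply: residue_X_order.
Qed.

Lemma proportionality_z : propA n z (n %/ gcdn (#|F| - 1) n).
Proof.
have [n_gt0 _] := order_h.
apply: is_least_dvdn => [|k].
  by rewrite divn_gt0 ?gcdn_gt0 ?n_gt0 ?orbT // dvdn_leq ?dvdn_gcdr.
apply: iff_trans (residue_X_constant_power hI order_h k).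
by split=> -[alpha alpha_neq0 /shift_eq_scale shift_k]; exists alpha.
Qed.
End CyclicCode.

(* Bounds on r and d, given n | q^m - 1: r | lcm(n, q - 1)/(q - 1) | R. *)
Lemma cycle_parameter_bounds (q m n : nat) :
  (1 < q)%N -> (0 < m)%N -> (0 < n)%N -> (n %| q ^ m - 1)%N ->
  let d := gcdn (q - 1) n in
  [/\ (1 <= n %/ d)%N, (n %/ d <= (q ^ m - 1) %/ (q - 1))%N,
      (n %/ d %| (q ^ m - 1) %/ (q - 1))%N & (1 <= d <= q - 1)%N].
Proof.
move=> q_gt1 m_gt0 n_gt0 n_dvd d.
have q1_gt0 : (0 < q - 1)%N by rewrite subn_gt0.
have d_gt0 : (0 < d)%N by rewrite gcdn_gt0 q1_gt0.
have R_gt0 : (0 < (q ^ m - 1) %/ (q - 1))%N.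
  by rewrite divn_gt0 // leq_sub2r // -{1}(expn1 q) leq_pexp2l // ltnW.
have r_dvd_R : (n %/ d %| (q ^ m - 1) %/ (q - 1))%N.
  by rewrite dvdn_divRL ?dvdn_sub1_expn // divn_gcd_mul dvdn_lcm n_dvd dvdn_sub1_expn.
split=> //; last by rewrite d_gt0 dvdn_leq ?dvdn_gcdl.
- by rewrite divn_gt0 // dvdn_leq ?dvdn_gcdr.
- exact: dvdn_leq.
Qed.

Theorem theorem2 (F : finFieldType) (h : {poly F}) (m n : nat) :
  (2 < #|F|)%N ->
  h \is monic -> irreducible_poly h -> size h = m.+1 -> (1 < m)%N ->
  poly_order h n -> n <> (#|F| ^ m - 1)%N ->
  let q := #|F| in
  let R := ((q ^ m - 1) %/ (q - 1))%N in
  let d := gcdn (q - 1) n in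
  let r := (n %/ d)%N in
  (forall z : {poly F}, inJ n h z -> nonzeroA n z ->
     exists nz rz : nat, periodA n z nz /\ propA n z rz /\
        rz = r /\ (nz %/ rz)%N = d) /\
  [/\ (1 <= r)%N, (r <= R)%N, (r %| R)%N & (1 <= d <= q - 1)%N].
Proof.
move=> _ h_monic h_irr size_h m_gt1 order_h _ q R d r.
have hI : monic_irreducible_poly h := (h_irr, h_monic).
have [n_gt0 _] := order_h.
split=> [z [a z_in_J] z_neq0|].
  exists n, r; split; first exact: (period_z hI order_h z_in_J z_neq0).
  split; first exact: (proportionality_z hI order_h z_in_J z_neq0).
  by rewrite divnA ?dvdn_gcdr // mulKn.
apply: cycle_parameter_bounds => //.
- exact: finNzRing_gt1.
- exact: ltnW.
- by have := order_dvdn_card hI order_h; rewrite size_h.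
Qed.
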